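(* Let $R$ be a Hilbert ring, i.e. a ring in which every prime ideal is an intersection of maximal ideals. Then $R$ is feckly clean if and only if $\operatorname{Max}(R)$ is strongly zero-dimensional.
   Context: Rings are associative with identity, not necessarily commutative; ideals are two-sided; $J(R)$ is the Jacobson radical. An element $u\in R$ is full if $RuR=R$. An element $a\in R$ is feckly clean if there exist $e\in R$ and a full element $u\in R$ with $a=e+u$ and $eR(1-e)\subseteq J(R)$; $R$ is feckly clean if every element is feckly clean. $\operatorname{Max}(R)$ is the set of all maximal ideals of $R$, topologized so that the closed sets are exactly the sets $V(I)=\{P\in\operatorname{Max}(R): I\subseteq P\}$ for ideals $I$. A topological space $X$ is strongly zero-dimensional if for any two disjoint closed sets $A,B\subseteq X$ there exist disjoint clopen sets $C_1,C_2$ with $A\subseteq C_1$ and $B\subseteq C_2$. *)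

(* Rings: associative with identity, possibly noncommutative
   (pzRingType also allows the zero ring). Subsets of R are Prop predicates. *)
From HB Require Import structures.
From mathcomp Require Import all_boot all_order all_algebra.
Set Implicit Arguments. Unset Strict Implicit. Unset Printing Implicit Defensive.
Import GRing.Theory.
Local Open Scope ring_scope.

Section Defs.
Variable R : pzRingType.

Definition ideal (I : R -> Prop) : Prop :=
  I 0 /\ (forall x y, I x -> I y -> I (x + y)) /\ (forall x, I x -> I (- x)) /\
  (forall r x, I x -> I (r * x)) /\ (forall r x, I x -> I (x * r)).

Definition left_ideal (I : R -> Prop) : Prop :=
  I 0 /\ (forall x y, I x -> I y -> I (x + y)) /\ (forall x, I x -> I (- x)) /\
  (forall r x, I x -> I (r * x)).

Definition proper (I : R -> Prop) : Prop := ~ I 1.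

Definition maximal_ideal (M : R -> Prop) : Prop :=
  ideal M /\ proper M /\
  forall I, ideal I -> proper I -> (forall x, M x -> I x) -> forall x, I x -> M x.

Definition maximal_left_ideal (M : R -> Prop) : Prop :=
  left_ideal M /\ proper M /\
  forall I, left_ideal I -> proper I -> (forall x, M x -> I x) -> forall x, I x -> M x.

Definition prime_ideal (P : R -> Prop) : Prop :=
  ideal P /\ proper P /\
  forall I J, ideal I -> ideal J -> (forall a b, I a -> J b -> P (a * b)) ->
    (forall a, I a -> P a) \/ (forall b, J b -> P b).

Definition jacobson (x : R) : Prop :=
  forall L, maximal_left_ideal L -> L x.

Definition hilbert_ring : Prop :=
  forall P, prime_ideal P ->
    forall x, (forall M, maximal_ideal M -> (forall y, P y -> M y) -> M x) -> P x.

(* u is full: RuR = R, i.e. 1 is a finite sum of elements a*u*b *)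
Definition full (u : R) : Prop :=
  exists s : seq (R * R), \sum_(p <- s) p.1 * u * p.2 = 1.

Definition feckly_clean_elt (a : R) : Prop :=
  exists e u, full u /\ a = e + u /\ forall r, jacobson (e * r * (1 - e)).

Definition feckly_clean : Prop := forall a, feckly_clean_elt a.

(* Max(R) with the hull-kernel topology. A subset of Max(R) is represented by
   a predicate on (R -> Prop), only its values on maximal ideals matter. *)
Definition V (I : R -> Prop) (P : R -> Prop) : Prop := forall x, I x -> P x.

Definition max_closed (A : (R -> Prop) -> Prop) : Prop :=
  exists I, ideal I /\ forall P, maximal_ideal P -> (A P <-> V I P).

Definition max_clopen (C : (R -> Prop) -> Prop) : Prop :=
  max_closed C /\ max_closed (fun P => ~ C P).

Definition max_subset (A B : (R -> Prop) -> Prop) : Prop :=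
  forall P, maximal_ideal P -> A P -> B P.

Definition max_disjoint (A B : (R -> Prop) -> Prop) : Prop :=
  forall P, maximal_ideal P -> A P -> B P -> False.

Definition Max_strongly_zero_dim : Prop :=
  forall A B, max_closed A -> max_closed B -> max_disjoint A B ->
    exists C1 C2, max_clopen C1 /\ max_clopen C2 /\ max_disjoint C1 C2 /\
      max_subset A C1 /\ max_subset B C2.

End Defs.

(* A feckly clean decomposition a = e + u makes e idempotent modulo every
   maximal ideal: each maximal ideal contains exactly one of e, 1 - e, so V(e)
   and V(1 - e) are complementary clopen subsets of Max(R). Conversely, for a
   clopen C = V(I) with complement V(K), comaximality I + K = R gives
   i + k = 1 with k in every maximal ideal outside C and 1 - k = i in every
   one inside C. Separating V(a) from V(1 - a) by such a C yields
   a = k + (a - k) with a - k in no maximal ideal, i.e. full, and k R (1 - k)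
   inside every maximal ideal. The Hilbert hypothesis turns the last fact into
   k R (1 - k) <= J(R): the largest two-sided ideal inside a maximal left ideal
   is prime, hence an intersection of maximal ideals. *)
From mathcomp Require Import all_boot all_order all_algebra.
From mathcomp Require Import boolp classical_sets.
Set Implicit Arguments. Unset Strict Implicit. Unset Printing Implicit Defensive.
Import GRing.Theory.
Local Open Scope ring_scope.

Section Ideals.
Variable R : pzRingType.
Implicit Types (I K L M : R -> Prop) (x y : R).

Lemma lideal0 L : left_ideal L -> L 0.
Proof. by case. Qed.
Lemma lidealD L x y : left_ideal L -> L x -> L y -> L (x + y).
Proof. by case=> _ [hD _]; apply: hD. Qed.
Lemma lidealN L x : left_ideal L -> L x -> L (- x).
Proof. by case=> _ [_ [hN _]]; apply: hN. Qed.
Lemma lidealMl L r x : left_ideal L -> L x -> L (r * x).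
Proof. by case=> _ [_ [_ hM]]; apply: hM. Qed.

Lemma idealE I : ideal I <-> left_ideal I /\ forall r x, I x -> I (x * r).
Proof.
by split=> [[? [? [? [? ?]]]] | [[? [? [? ?]]] ?]].
Qed.

Lemma ideal_left I : ideal I -> left_ideal I.
Proof. by case/idealE. Qed.

Lemma ideal0 I : ideal I -> I 0.
Proof. by move/ideal_left/lideal0. Qed.
Lemma idealD I x y : ideal I -> I x -> I y -> I (x + y).
Proof. by move/ideal_left/lidealD; apply. Qed.
Lemma idealN I x : ideal I -> I x -> I (- x).
Proof. by move/ideal_left/lidealN; apply. Qed.
Lemma idealB I x y : ideal I -> I x -> I y -> I (x - y).
Proof. by move=> hI hx hy; apply: idealD hx (idealN hI hy). Qed.
Lemma idealMl I r x : ideal I -> I x -> I (r * x).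
Proof. by move/ideal_left/lidealMl; apply. Qed.
Lemma idealMr I r x : ideal I -> I x -> I (x * r).
Proof. by case/idealE=> _ hMr; apply: hMr. Qed.

Lemma ideal_sum I (T : Type) (s : seq T) (F : T -> R) :
  ideal I -> (forall p, I (F p)) -> I (\sum_(p <- s) F p).
Proof. by move=> hI hF; apply: (big_ind I) => // [|x y]; [apply: ideal0 | apply: idealD]. Qed.

Lemma maximal_ideal_not_both M e : maximal_ideal M -> M e -> M (1 - e) -> False.
Proof. by case=> hM [pM _] he h1e; apply: pM; rewrite -(subrK e 1); apply: idealD. Qed.

Definition ideal_gen x : R -> Prop :=
  fun y => exists s : seq (R * R), y = \sum_(p <- s) p.1 * x * p.2.

Lemma ideal_gen_ideal x : ideal (ideal_gen x).
Proof.
split; first by exists [::]; rewrite big_nil.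
split; first by move=> _ _ [s1 ->] [s2 ->]; exists (s1 ++ s2); rewrite big_cat.
split.
  move=> _ [s ->]; exists [seq (- p.1, p.2) | p <- s].
  by rewrite big_map -sumrN; apply: eq_bigr => p _; rewrite !mulNr.
split.
  move=> r _ [s ->]; exists [seq (r * p.1, p.2) | p <- s].
  by rewrite big_map mulr_sumr; apply: eq_bigr => p _; rewrite !mulrA.
move=> r _ [s ->]; exists [seq (p.1, p.2 * r) | p <- s].
by rewrite big_map mulr_suml; apply: eq_bigr => p _; rewrite !mulrA.
Qed.

Lemma ideal_gen_self x : ideal_gen x x.
Proof. by exists [:: (1, 1)]; rewrite big_seq1 mul1r mulr1. Qed.

Lemma ideal_gen_min I x : ideal I -> I x -> forall y, ideal_gen x y -> I y.
Proof.
by move=> hI hx _ [s ->]; apply: ideal_sum => // p; apply: idealMr => //; apply: idealMl.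
Qed.

Lemma V_ideal_gen P x : ideal P -> V (ideal_gen x) P <-> P x.
Proof.
move=> hP; split=> [|hx]; first by apply; apply: ideal_gen_self.
exact: ideal_gen_min.
Qed.

Lemma max_closed_V1 x : max_closed (fun P => P x).
Proof.
exists (ideal_gen x); split; first exact: ideal_gen_ideal.
by move=> P [hP _]; rewrite V_ideal_gen.
Qed.

Definition ideal_add I K : R -> Prop :=
  fun y => exists a b, I a /\ K b /\ y = a + b.

Lemma ideal_add_ideal I K : ideal I -> ideal K -> ideal (ideal_add I K).
Proof.
move=> hI hK; split.
  by exists 0, 0; rewrite addr0; split; [apply: ideal0 | split; [apply: ideal0|]].
split.
  move=> _ _ [a [b [ha [hb ->]]]] [a' [b' [ha' [hb' ->]]]].
  exists (a + a'), (b + b'); rewrite addrACA.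
  by split; [apply: idealD | split; [apply: idealD|]].
split.
  move=> _ [a [b [ha [hb ->]]]]; exists (- a), (- b); rewrite opprD.
  by split; [apply: idealN | split; [apply: idealN|]].
split.
  move=> r _ [a [b [ha [hb ->]]]]; exists (r * a), (r * b); rewrite mulrDr.
  by split; [apply: idealMl | split; [apply: idealMl|]].
move=> r _ [a [b [ha [hb ->]]]]; exists (a * r), (b * r); rewrite mulrDl.
by split; [apply: idealMr | split; [apply: idealMr|]].
Qed.

Lemma ideal_addl I K x : ideal K -> I x -> ideal_add I K x.
Proof. by move=> hK hx; exists x, 0; rewrite addr0; split=> //; split; [apply: ideal0|]. Qed.

Lemma ideal_addr I K x : ideal I -> K x -> ideal_add I K x.
Proof. by move=> hI hx; exists 0, x; rewrite add0r; split; [apply: ideal0|]. Qed.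

End Ideals.

Section Zorn.
Variable R : pzRingType.
Implicit Types (I : R -> Prop) (Q : (R -> Prop) -> Prop).

Definition chain_closed Q :=
  forall C : (R -> Prop) -> Prop, (forall N, C N -> Q N) -> (exists N, C N) ->
  (forall N1 N2, C N1 -> C N2 -> (forall x, N1 x -> N2 x) \/ (forall x, N2 x -> N1 x)) ->
  Q (fun x => exists N, C N /\ N x).

Lemma chain_closed_left_ideal : chain_closed (@left_ideal R).
Proof.
move=> C hC [N0 CN0] tot.
split; first by exists N0; split=> //; apply: lideal0; apply: hC.
split.
  move=> x y [N1 [C1 h1]] [N2 [C2 h2]].
  case: (tot _ _ C1 C2) => sub.
    by exists N2; split=> //; apply: lidealD (sub _ h1) h2; apply: hC.
  by exists N1; split=> //; apply: lidealD h1 (sub _ h2); apply: hC.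
split; first by move=> x [N [CN h]]; exists N; split=> //; apply: lidealN h; apply: hC.
by move=> r x [N [CN h]]; exists N; split=> //; apply: lidealMl h; apply: hC.
Qed.

Lemma chain_closed_ideal : chain_closed (@ideal R).
Proof.
move=> C hC C0 tot; apply/idealE; split.
  by apply: chain_closed_left_ideal C0 tot => N /hC /ideal_left.
by move=> r x [N [CN h]]; exists N; split=> //; apply: idealMr h; apply: hC.
Qed.

Lemma maximal_proper_above Q I : chain_closed Q -> Q I -> proper I ->
  exists M, Q M /\ proper M /\ (forall x, I x -> M x) /\
    forall N, Q N -> proper N -> (forall x, M x -> N x) -> forall x, N x -> M x.
Proof.
move=> hQ QI pI.
pose P N := Q N /\ proper N /\ forall x, I x -> N x.
pose T := {N | P N}.
pose le (a b : T) := `[< forall x, sval a x -> sval b x >].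
have [||||t tmax] := @Zorn T le.
- by move=> t; apply/asboolP.
- by move=> r s t /asboolP h1 /asboolP h2; apply/asboolP => x /h1 /h2.
- move=> [N pN] [N' pN'] /asboolP /= h1 /asboolP /= h2; apply: eq_exist.
  by apply/funext => x; apply/propext; split; [apply: h1 | apply: h2].
- move=> A totA; have [[t0 At0]|nA] := pselect (exists t, A t); last first.
    exists (exist _ I (conj QI (conj pI (fun x h => h)))) => s As.
    by case: nA; exists s.
  pose C N := exists t : T, A t /\ sval t = N.
  have pU : P (fun x => exists N, C N /\ N x).
    split.
      apply: hQ; first by move=> N [t [_ <-]]; case: (svalP t).
        by exists (sval t0), t0.
      move=> N1 N2 [t1 [A1 <-]] [t2 [A2 <-]].
      by case: (totA _ _ A1 A2) => /asboolP h; [left | right].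
    split; first by move=> [N [[t [_ <-]] t1]]; case: (svalP t) => _ [].
    move=> x Ix; exists (sval t0); split; first by exists t0.
    by case: (svalP t0) => _ [_]; apply.
  exists (exist _ _ pU) => s As; apply/asboolP => x sx.
  by exists (sval s); split=> //; exists s.
exists (sval t); case: (svalP t) => Qt [pt It]; do 3!split=> //.
move=> N QN pN tN.
have pN' : P N by split=> //; split=> // x /It /tN.
by rewrite -(tmax (exist _ N pN')) //; apply/asboolP.
Qed.

Lemma maximal_ideal_above I : ideal I -> proper I ->
  exists M, maximal_ideal M /\ forall x, I x -> M x.
Proof.
move=> hI pI; have [M [hM [pM [IM mM]]]] := maximal_proper_above chain_closed_ideal hI pI.
by exists M.
Qed.

Lemma maximal_left_ideal_above I : left_ideal I -> proper I ->
  exists M, maximal_left_ideal M /\ forall x, I x -> M x.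
Proof.
move=> hI pI.
have [M [hM [pM [IM mM]]]] := maximal_proper_above chain_closed_left_ideal hI pI.
by exists M.
Qed.

End Zorn.

Section MaximalIdeals.
Variable R : pzRingType.
Implicit Types (I K M : R -> Prop) (e u : R).

Lemma fullP u : full u <-> forall M, maximal_ideal M -> ~ M u.
Proof.
split=> [[s hs] M [hM [pM _]] Mu | notin].
  by apply: pM; rewrite -hs; apply: ideal_sum => // p; apply: idealMr => //; apply: idealMl.
have [[s hs] | n1] := pselect (ideal_gen u 1); first by exists s; rewrite -hs.
have [M [hM sM]] := maximal_ideal_above (ideal_gen_ideal u) n1.
by case: (notin M hM); apply: sM; apply: ideal_gen_self.
Qed.

Lemma comaximal_of_disjoint I K : ideal I -> ideal K ->
  (forall M, maximal_ideal M -> V I M -> V K M -> False) ->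
  exists i k, I i /\ K k /\ i + k = 1.
Proof.
move=> hI hK disj.
have [[i [k [hi [hk ->]]]] | n1] := pselect (ideal_add I K 1); first by exists i, k.
have [M [hM sM]] := maximal_ideal_above (ideal_add_ideal hI hK) n1.
by case: (disj M hM) => x hx; apply: sM; [apply: ideal_addl | apply: ideal_addr].
Qed.

Lemma maximal_ideal_add_gen M e : maximal_ideal M -> ~ M e ->
  ideal_add M (ideal_gen e) 1.
Proof.
move=> [hM [_ mM]] ne; have [//|n1] := pselect (ideal_add M (ideal_gen e) 1).
case: ne; apply: (mM _ (ideal_add_ideal hM (ideal_gen_ideal e)) n1).
  by move=> x; apply: ideal_addl (ideal_gen_ideal e).
by apply: ideal_addr => //; apply: ideal_gen_self.
Qed.

Lemma max_clopen_complement (C : (R -> Prop) -> Prop) : max_clopen C ->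
  exists e, forall M, maximal_ideal M -> (C M -> M (1 - e)) /\ (~ C M -> M e).
Proof.
move=> [[I [hI CI]] [K [hK CK]]].
have [i [k [hi [hk ik]]]] : exists i k, I i /\ K k /\ i + k = 1.
  by apply: comaximal_of_disjoint => // M hM /(CI M hM) ? /(CK M hM).
exists k => M hM; have -> : 1 - k = i by rewrite -ik addrK.
by split=> [/(CI M hM) | /(CK M hM)]; apply.
Qed.

Lemma max_clopen_split e :
  (forall M, maximal_ideal M -> M e \/ M (1 - e)) -> max_clopen (fun P => P e).
Proof.
move=> split_e; split; first exact: max_closed_V1.
exists (ideal_gen (1 - e)); split; first exact: ideal_gen_ideal.
move=> P hP; rewrite V_ideal_gen; last by case: hP.
split; first by case: (split_e P hP).
by move=> h1e he; apply: maximal_ideal_not_both hP he h1e.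
Qed.

End MaximalIdeals.

Section Jacobson.
Variable R : pzRingType.
Implicit Types (L M : R -> Prop) (x : R).

Lemma maximal_left_ideal_span L t : maximal_left_ideal L -> ~ L t ->
  forall y, exists l c, L l /\ y = l + c * t.
Proof.
move=> [hL [_ mL]] nt.
pose T y := exists l c, L l /\ y = l + c * t.
have hT : left_ideal T.
  split; first by exists 0, 0; rewrite mul0r addr0; split=> //; apply: lideal0.
  split.
    move=> _ _ [l [c [hl ->]]] [l' [c' [hl' ->]]]; exists (l + l'), (c + c').
    by split; [apply: lidealD | rewrite mulrDl addrACA].
  split.
    move=> _ [l [c [hl ->]]]; exists (- l), (- c).
    by split; [apply: lidealN | rewrite opprD mulNr].
  move=> r _ [l [c [hl ->]]]; exists (r * l), (r * c).
  by split; [apply: lidealMl | rewrite mulrDr mulrA].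
have T1 : T 1.
  have [//|n1] := pselect (T 1); case: nt; apply: (mL T hT n1).
    by move=> x hx; exists x, 0; rewrite mul0r addr0.
  by exists 0, 1; rewrite mul1r add0r; split=> //; apply: lideal0.
by move=> y; rewrite -[y]mulr1; apply: lidealMl hT T1.
Qed.

Lemma maximal_left_ideal_colon L s : maximal_left_ideal L -> ~ L s ->
  maximal_left_ideal (fun r => L (r * s)).
Proof.
move=> hLm ns; have [hL [pL _]] := hLm.
split.
  split; first by rewrite mul0r; apply: lideal0.
  split; first by move=> x y hx hy; rewrite mulrDl; apply: lidealD.
  split; first by move=> x hx; rewrite mulNr; apply: lidealN.
  by move=> r x hx; rewrite -mulrA; apply: lidealMl.
split; first by rewrite /proper mul1r.
move=> N hN pN sN n Nn; have [//|nns] := pselect (L (n * s)).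
have [l [c [hl e]]] := maximal_left_ideal_span hLm nns s.
case: pN; rewrite -(subrK (c * n) 1); apply: lidealD (lidealMl c hN Nn) => //.
by apply: sN; rewrite mulrBl mul1r -mulrA {1}e addrK.
Qed.

(* The largest two-sided ideal contained in L. *)
Definition left_core L : R -> Prop := fun r => forall s, L (r * s).

Lemma left_core_ideal L : left_ideal L -> ideal (left_core L).
Proof.
move=> hL; split; first by move=> s; rewrite mul0r; apply: lideal0.
split; first by move=> x y hx hy s; rewrite mulrDl; apply: lidealD.
split; first by move=> x hx s; rewrite mulNr; apply: lidealN.
split; first by move=> r x hx s; rewrite -mulrA; apply: lidealMl.
by move=> r x hx s; rewrite -mulrA.
Qed.

Lemma left_core_proper L : proper L -> proper (left_core L).
Proof. by move=> pL /(_ 1); rewrite mulr1. Qed.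

Lemma left_core_prime L : maximal_left_ideal L -> prime_ideal (left_core L).
Proof.
move=> hLm; have [hL [pL _]] := hLm.
split; first exact: left_core_ideal.
split; first exact: left_core_proper.
move=> I J _ hJ hIJ; have [|nJ] := pselect (forall b, J b -> left_core L b).
  by right.
left; have [b [Jb [s ns]]] : exists b, J b /\ exists s, ~ L (b * s).
  apply: contra_notP nJ => nex b Jb s; apply: contra_notP nex => nbs.
  by exists b; split=> //; exists s.
move=> a Ia s'; have [l [c [hl ->]]] := maximal_left_ideal_span hLm ns s'.
rewrite mulrDr !mulrA -(mulrA a c b); apply: lidealD (lidealMl a hL hl) _ => //.
exact: hIJ Ia (idealMl c hJ Jb) s.
Qed.

Lemma jacobson_left_core x L : jacobson x -> maximal_left_ideal L -> left_core L x.
Proof.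
move=> jx hLm s; have [|ns] := pselect (L s); first exact: lidealMl hLm.1.
exact: jx _ (maximal_left_ideal_colon hLm ns).
Qed.

Lemma jacobson_maximal_ideal x M : jacobson x -> maximal_ideal M -> M x.
Proof.
move=> jx [hM [pM mM]].
have [L [hLm ML]] := maximal_left_ideal_above (ideal_left hM) pM.
apply: (mM _ (left_core_ideal hLm.1) (left_core_proper hLm.2.1)).
  by move=> m hm s; apply: ML; apply: idealMr.
exact: jacobson_left_core.
Qed.

Lemma hilbert_jacobson x : hilbert_ring R ->
  (forall M, maximal_ideal M -> M x) -> jacobson x.
Proof.
move=> hR hx L hLm.
have /(_ 1) := hR _ (left_core_prime hLm) x (fun M hM _ => hx M hM).
by rewrite mulr1.
Qed.

(* Each maximal ideal M contains e or 1 - e: write 1 = m + sum a e b with m in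
   M, so 1 - e = m (1 - e) + sum a (e b (1 - e)) and e b (1 - e) lies in M. *)
Lemma maximal_ideal_split e M : (forall r, jacobson (e * r * (1 - e))) ->
  maximal_ideal M -> M e \/ M (1 - e).
Proof.
move=> je hMm; have [Me|ne] := pselect (M e); [by left | right].
have [m [b [hm [[s ->] e1]]]] := maximal_ideal_add_gen hMm ne.
have hM := hMm.1; rewrite -[1 - e]mul1r {1}e1 mulrDl mulr_suml; apply: idealD (idealMr _ hM hm) _ => //.
apply: ideal_sum => // p; rewrite -!mulrA; apply: idealMl => //; rewrite mulrA.
exact: jacobson_maximal_ideal (je p.2) hMm.
Qed.

End Jacobson.

Section Main.
Variable R : pzRingType.

Lemma feckly_clean_strongly_zero_dim : feckly_clean R -> Max_strongly_zero_dim R.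
Proof.
move=> fc A B [I [hI AI]] [K [hK BK]] dAB.
have [i [k [hi [hk ik]]]] : exists i k, I i /\ K k /\ i + k = 1.
  by apply: comaximal_of_disjoint => // M hM /(AI M hM) ? /(BK M hM); apply: dAB.
have [e [u [/fullP fu [ke je]]]] := fc k.
have split_e M : maximal_ideal M -> M e \/ M (1 - e) by apply: maximal_ideal_split.
have split_1e M : maximal_ideal M -> M (1 - e) \/ M (1 - (1 - e)).
  by rewrite subKr or_comm; apply: split_e.
have hu : u = k - e by rewrite ke addrC addKr.
exists (fun P => P e), (fun P => P (1 - e)).
split; first exact: max_clopen_split.
split; first exact: max_clopen_split.
split; first by move=> P hP; apply: maximal_ideal_not_both.
split=> P hP.
- move/(AI P hP)/(_ i hi) => Pi; case: (split_e P hP) => // P1e; exfalso.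
  have hu' : u = (1 - e) - i by rewrite hu -ik addrAC [i + k]addrC addrK.
  by apply: (fu P hP); rewrite hu'; apply: idealB P1e Pi; case: hP.
- move/(BK P hP)/(_ k hk) => Pk; case: (split_e P hP) => // Pe; exfalso.
  by apply: (fu P hP); rewrite hu; apply: idealB Pk Pe; case: hP.
Qed.

Lemma strongly_zero_dim_feckly_clean : hilbert_ring R ->
  Max_strongly_zero_dim R -> feckly_clean R.
Proof.
move=> hR sz a.
have [C1 [C2 [clC1 [_ [dC [sA sB]]]]]] :=
  sz _ _ (max_closed_V1 a) (max_closed_V1 (1 - a))
    (fun P hP => maximal_ideal_not_both hP).
have [e he] := max_clopen_complement clC1.
exists e, (a - e); split; last split.
- apply/fullP => M hM Mu; have hMi := hM.1.
  have [/[dup] c1 /(he M hM).1 M1e | c1] := pselect (C1 M).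
    apply: dC hM c1 (sB M hM _).
    have -> : 1 - a = (1 - e) - (a - e) by rewrite opprB subrKA.
    exact: idealB.

  by apply/c1/sA => //; rewrite -(subrK e a); apply: idealD _ ((he M hM).2 c1).
- by rewrite addrC subrK.
- move=> r; apply: hilbert_jacobson hR _ => M hM.
  have [/(he M hM).1 M1e | /(he M hM).2 Me] := pselect (C1 M).
    exact: idealMl hM.1 M1e.
  by apply: idealMr; [case: hM | apply: idealMr; case: hM].
Qed.

End Main.

Theorem corollary3p4 (R : pzRingType) :
  hilbert_ring R -> (feckly_clean R <-> Max_strongly_zero_dim R).
Proof.
move=> hR; split; first exact: feckly_clean_strongly_zero_dim.
exact: strongly_zero_dim_feckly_clean.
Qed.
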